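(* Let $(r_k)_{k\in\mathbb N}$ be a nonnegative sequence such that $(\Phi(k)r_k/k)_{k\in\mathbb N}$ is nonincreasing. Define $a_0=0$ and $a_n=\sum_{k=1}^n g_{n,k}r_k$ for $n\ge1$. Then $a_n=O\big(\sum_{k=1}^n r_k\Phi(k)/k\big)$ as $n\to\infty$.
   Context: Let $\nu$ be a nonzero measure on $(0,1)$ with $\int_0^1x\,\nu(dx)<\infty$; for $1\le k\le m$ let $\lambda_{m,k}=\int_0^1x^k(1-x)^{m-k}\nu(dx)$, $\varphi_{m,k}=\binom mk\lambda_{m,k}$, and $\Phi(z)=\int_0^1(1-(1-x)^z)\nu(dx)$ (so $\Phi(n)=\sum_{k=1}^n\varphi_{n,k}$). Let $N_n^*$ be the nonincreasing continuous-time Markov chain started at $n$ which jumps from $m$ to $m-k$ at rate $\varphi_{m,k}$, $1\le k\le m$ (absorbed at $0$). For $0\le k\le n$, $g_{n,k}$ denotes the probability that $N_n^*$ ever visits state $k$. *)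

From Stdlib Require Import Reals Lra Classical ClassicalEpsilon.
Open Scope R_scope.

Definition in01 (x : R) : Prop := 0 < x < 1.

Fixpoint fsum (n : nat) (f : nat -> R) : R :=
  match n with
  | O => 0
  | S n' => fsum n' f + f n'
  end.

(** Supremum of a set of reals (0 if empty or unbounded above). *)
Definition Rsup (E : R -> Prop) : R :=
  match excluded_middle_informative (bound E /\ exists x, E x) with
  | left H => proj1_sig (completeness E (proj1 H) (proj2 H))
  | right _ => 0
  end.

Definition ind (A : R -> Prop) (x : R) : R :=
  if excluded_middle_informative (A x) then 1 else 0.

(** A finite (nonnegative, countably additive) measure on (0,1), defined on a
    sigma-algebra of subsets of R containing all open intervals (hence all
    Borel sets); it is concentrated on (0,1). *)
Record fmeasure01 := {
  msbl : (R -> Prop) -> Prop;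
  mu : (R -> Prop) -> R;
  msbl_interval : forall a b : R, msbl (fun x => a < x < b);
  msbl_compl : forall A, msbl A -> msbl (fun x => ~ A x);
  msbl_union : forall A : nat -> R -> Prop,
      (forall n, msbl (A n)) -> msbl (fun x => exists n, A n x);
  mu_nonneg : forall A, msbl A -> 0 <= mu A;
  mu_sigma_additive : forall A : nat -> R -> Prop,
      (forall n, msbl (A n)) ->
      (forall i j x, A i x -> A j x -> i = j) ->
      infinite_sum (fun n => mu (A n)) (mu (fun x => exists n, A n x));
  mu_support : forall A, msbl A -> mu A = mu (fun x => A x /\ in01 x)
}.

Definition simple_below (M : fmeasure01) (f : R -> R) (v : R) : Prop :=
  exists (n : nat) (c : nat -> R) (A : nat -> R -> Prop),
    (forall i, (i < n)%nat -> 0 <= c i /\ msbl M (A i)) /\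
    (forall x, in01 x -> fsum n (fun i => c i * ind (A i) x) <= f x) /\
    v = fsum n (fun i => c i * mu M (A i)).

Definition integral (M : fmeasure01) (f : R -> R) : R :=
  Rsup (simple_below M f).

(** The measure nu of the paper is encoded by the finite measure
    M(dx) = x nu(dx); thus nu(dx) = x^{-1} M(dx). *)

(** lambda_{m,k} = int x^k (1-x)^{m-k} nu(dx) = int x^{k-1}(1-x)^{m-k} M(dx), 1<=k<=m *)
Definition lam (M : fmeasure01) (m k : nat) : R :=
  integral M (fun x => x ^ (k - 1) * (1 - x) ^ (m - k)).

Definition phi (M : fmeasure01) (m k : nat) : R := C m k * lam M m k.

(** Phi(n) = int (1-(1-x)^n) nu(dx) = int (1-(1-x)^n)/x M(dx), at integers n *)
Definition PhiN (M : fmeasure01) (n : nat) : R :=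
  integral M (fun x => (1 - (1 - x) ^ n) / x).

(** Jump chain of N^*: from state a >= 1 it jumps to c < a with probability
    phi_{a,a-c} / Phi(a). State 0 is absorbing (no further jumps). *)
Definition Pjump (M : fmeasure01) (a c : nat) : R :=
  phi M a (a - c) / PhiN M a.

(** jpow M t a b = P(jump chain started at a is at b after exactly t jumps). *)
Fixpoint jpow (M : fmeasure01) (t a b : nat) : R :=
  match t with
  | O => if Nat.eqb a b then 1 else 0
  | S t' => fsum a (fun c => Pjump M a c * jpow M t' c b)
  end.

(** g_{n,k} = P(N_n^* ever visits k). Since the chain is strictly decreasing
    it visits k at most once and makes at most n jumps, so this equals
    sum_{t=0}^{n} P(X_t = k) for the embedded jump chain X. *)
Definition g (M : fmeasure01) (n k : nat) : R :=
  fsum (S n) (fun t => jpow M t n k).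

Definition a_seq (M : fmeasure01) (r : nat -> R) (n : nat) : R :=
  fsum n (fun i => g M n (S i) * r (S i)).

Definition b_seq (M : fmeasure01) (r : nat -> R) (n : nat) : R :=
  fsum n (fun i => r (S i) * PhiN M (S i) / INR (S i)).

(* The function V(a) = b_a / kappa, with kappa = M(0,1)/2, is a Lyapunov function for the
   jump chain:  r_a + E_a[V(X_1)] <= V(a).  Indeed, since r_k Phi(k)/k is nonincreasing, a
   jump from a to c lowers b by at least (a - c) r_a Phi(a)/a, while the mean jump size
   sum_k k phi_{a,k} / Phi(a) is at least kappa a / Phi(a).  Summing the inequality along
   the chain gives a_n <= V(n) = b_n / kappa.  The mean jump size bound comes from the
   binomial identity sum_k k C(a,k) x^(k-1) (1-x)^(a-k) = a, integrated against a step
   function on a grid of mesh 1/(2a). *)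

From Stdlib Require Import Reals Arith Lra Lia Classical ClassicalEpsilon FunctionalExtensionality PropExtensionality.
Open Scope R_scope.

Lemma fsum_ext n f g : (forall i, (i < n)%nat -> f i = g i) -> fsum n f = fsum n g.
Proof.
  induction n; intros H; simpl; auto.
  rewrite IHn by (intros; apply H; lia). rewrite H by lia; reflexivity.
Qed.

Lemma fsum_le n f g : (forall i, (i < n)%nat -> f i <= g i) -> fsum n f <= fsum n g.
Proof.
  induction n; intros H; simpl; [lra|].
  apply Rplus_le_compat; [apply IHn; intros|]; apply H; lia.
Qed.

Lemma fsum_zero n f : (forall i, (i < n)%nat -> f i = 0) -> fsum n f = 0.
Proof.
  induction n; intros H; simpl; auto.
  rewrite IHn by (intros; apply H; lia). rewrite H by lia; ring.
Qed.

Lemma fsum_nonneg n f : (forall i, (i < n)%nat -> 0 <= f i) -> 0 <= fsum n f.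
Proof.
  intros H. rewrite <- (fsum_zero n (fun _ => 0)) by reflexivity.
  apply fsum_le; auto.
Qed.

Lemma fsum_add n f g : fsum n (fun i => f i + g i) = fsum n f + fsum n g.
Proof. induction n; simpl; [ring|]. rewrite IHn; ring. Qed.

Lemma fsum_scal n c f : fsum n (fun i => c * f i) = c * fsum n f.
Proof. induction n; simpl; [ring|]. rewrite IHn; ring. Qed.

Lemma fsum_shift n f : fsum (S n) f = f 0%nat + fsum n (fun i => f (S i)).
Proof. induction n; simpl in *; [ring|]. rewrite IHn; ring. Qed.

Lemma fsum_swap n m (f : nat -> nat -> R) :
  fsum n (fun i => fsum m (fun j => f i j)) = fsum m (fun j => fsum n (fun i => f i j)).
Proof.
  induction n; simpl.
  - symmetry; apply fsum_zero; auto.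
  - rewrite IHn, <- fsum_add; reflexivity.
Qed.

Lemma fsum_app n m f : fsum (n + m) f = fsum n f + fsum m (fun i => f (n + i)%nat).
Proof.
  induction m; simpl.
  - rewrite Nat.add_0_r; ring.
  - rewrite Nat.add_succ_r; simpl. rewrite IHm; ring.
Qed.

Lemma fsum_sum_f_R0 n f : fsum (S n) f = sum_f_R0 f n.
Proof. induction n; simpl in *; [ring|]. rewrite IHn; ring. Qed.

Lemma fsum_rev n h : fsum n (fun c => h (n - c)%nat) = fsum n (fun i => h (S i)).
Proof.
  revert h; induction n; intros h; [reflexivity|].
  rewrite fsum_shift, Nat.sub_0_r. simpl. rewrite IHn; ring.
Qed.

Lemma fsum_ge_term n f j :
  (forall i, (i < n)%nat -> 0 <= f i) -> (j < n)%nat -> f j <= fsum n f.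
Proof.
  induction n; intros H Hj; [lia|]. simpl.
  assert (0 <= fsum n f) by (apply fsum_nonneg; intros; apply H; lia).
  destruct (Nat.eq_dec j n) as [->|Hne]; [lra|].
  assert (f j <= fsum n f) by (apply IHn; [intros; apply H|]; lia).
  assert (0 <= f n) by (apply H; lia). lra.
Qed.

Lemma pred_ext (A B : R -> Prop) : (forall x, A x <-> B x) -> A = B.
Proof.
  intros H; apply functional_extensionality; intros x.
  apply propositional_extensionality; auto.
Qed.

Lemma ind_in (A : R -> Prop) x : A x -> ind A x = 1.
Proof. unfold ind; destruct (excluded_middle_informative (A x)); tauto. Qed.

Lemma ind_out (A : R -> Prop) x : ~ A x -> ind A x = 0.
Proof. unfold ind; destruct (excluded_middle_informative (A x)); tauto. Qed.

Lemma ind_nonneg (A : R -> Prop) x : 0 <= ind A x.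
Proof. unfold ind; destruct (excluded_middle_informative (A x)); lra. Qed.

Lemma fsum_ind_disjoint_le n (c : nat -> R) (I : nat -> R -> Prop) x F :
  (forall j k, (j < n)%nat -> (k < n)%nat -> I j x -> I k x -> j = k) ->
  (forall j, (j < n)%nat -> I j x -> c j <= F) -> 0 <= F ->
  fsum n (fun j => c j * ind (I j) x) <= F.
Proof.
  induction n; intros Hdisj Hc HF; simpl; [lra|].
  destruct (classic (I n x)) as [Hn|Hn].
  - rewrite ind_in, fsum_zero; auto.
    + specialize (Hc n ltac:(lia) Hn). lra.
    + intros j Hj. rewrite ind_out; [ring|]. intros Hjx.
      specialize (Hdisj j n ltac:(lia) ltac:(lia) Hjx Hn). lia.
  - rewrite ind_out by auto. rewrite Rmult_0_r, Rplus_0_r.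
    apply IHn; auto.
Qed.

Section Measure.
Variable M : fmeasure01.

Lemma msbl_ext A B : (forall x, A x <-> B x) -> msbl M A -> msbl M B.
Proof. intros H; rewrite (pred_ext A B H); auto. Qed.

Lemma mu_ext A B : (forall x, A x <-> B x) -> mu M A = mu M B.
Proof. intros H; rewrite (pred_ext A B H); auto. Qed.

Lemma msbl01 : msbl M in01.
Proof. exact (msbl_interval M 0 1). Qed.

Lemma msbl_empty : msbl M (fun _ => False).
Proof.
  apply (msbl_ext (fun x => 0 < x < 0)); [intros; lra | apply msbl_interval].
Qed.

(* Countable additivity for the constant family of empty sets: n * mu(empty) stays
   bounded, which forces mu(empty) = 0. *)
Lemma mu_empty : mu M (fun _ => False) = 0.
Proof.
  assert (H := mu_sigma_additive M (fun _ _ => False) (fun _ => msbl_empty)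
                 (fun i j x H _ => False_ind _ H)).
  simpl in H. rewrite (mu_ext (fun x => exists _ : nat, False) (fun _ => False)) in H
    by (intros; split; [intros [_ h]|]; tauto).
  set (m := mu M (fun _ => False)) in H |- *.
  destruct (Req_dec m 0) as [E|E]; auto.
  assert (Hm : 0 < Rabs m) by (apply Rabs_pos_lt; auto).
  destruct (H (Rabs m / 2)) as [N HN]; [lra|].
  specialize (HN (S N) ltac:(lia)). unfold R_dist in HN.
  rewrite sum_cte, S_INR, <- Rabs_Ropp in HN.
  replace (- (m * (INR (S N) + 1) - m)) with (- m * INR (S N)) in HN by ring.
  rewrite Rabs_mult, Rabs_Ropp, (Rabs_right (INR (S N))) in HN
    by (apply Rle_ge, pos_INR).
  assert (1 <= INR (S N)) by (rewrite S_INR; assert (0 <= INR N) by apply pos_INR; lra).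
  nra.
Qed.

Lemma msbl_union2 A B : msbl M A -> msbl M B -> msbl M (fun x => A x \/ B x).
Proof.
  intros HA HB.
  apply (msbl_ext (fun x => exists n : nat, (if Nat.eqb n 0 then A else B) x)).
  - intros x; split.
    + intros [n Hn]; destruct (Nat.eqb n 0); auto.
    + intros [h|h]; [exists 0%nat | exists 1%nat]; auto.
  - apply msbl_union; intros n; destruct (Nat.eqb n 0); auto.
Qed.

Lemma msbl_inter A B : msbl M A -> msbl M B -> msbl M (fun x => A x /\ B x).
Proof.
  intros HA HB. apply (msbl_ext (fun x => ~ (~ A x \/ ~ B x))); [intros; tauto|].
  apply msbl_compl, msbl_union2; apply msbl_compl; auto.
Qed.

Lemma msbl_gt c : msbl M (fun x => c < x).
Proof.
  apply (msbl_ext (fun x => exists m : nat, c < x < c + INR m)).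
  - intros x; split; [intros [m Hm]; lra|].
    intros Hx. destruct (INR_unbounded (x - c)) as [m Hm]. exists m; lra.
  - apply msbl_union; intros; apply msbl_interval.
Qed.

Lemma mu_split E A : msbl M E -> msbl M A ->
  mu M E = mu M (fun x => E x /\ A x) + mu M (fun x => E x /\ ~ A x).
Proof.
  intros HE HA.
  set (Sq := fun n : nat => match n with
             | 0 => fun x => E x /\ A x
             | 1 => fun x => E x /\ ~ A x
             | _ => fun _ => False end).
  assert (HS : forall n, msbl M (Sq n)).
  { intros [|[|n]]; simpl; auto using msbl_inter, msbl_compl, msbl_empty. }
  assert (HD : forall i j x, Sq i x -> Sq j x -> i = j).
  { intros [|[|i]] [|[|j]] x; simpl; tauto. }
  assert (H := mu_sigma_additive M Sq HS HD).
  rewrite (mu_ext (fun x => exists n, Sq n x) E) in H.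
  2:{ intros x; split.
      - intros [[|[|n]] h]; simpl in h; tauto.
      - intros h. destruct (classic (A x)); [exists 0%nat | exists 1%nat]; simpl; auto. }
  apply (uniqueness_sum _ _ _ H).
  intros eps Heps. exists 1%nat. intros n Hn. unfold R_dist.
  enough (sum_f_R0 (fun k => mu M (Sq k)) n = mu M (Sq 0%nat) + mu M (Sq 1%nat))
    as -> by (simpl; rewrite Rminus_diag, Rabs_R0; auto).
  induction n as [|[|n] IH]; [lia | reflexivity|].
  simpl sum_f_R0 in *. rewrite IH by lia.
  change (mu M (Sq (S (S (S n))))) with (mu M (fun _ => False)). rewrite mu_empty. ring.
Qed.

Lemma simple_sum_le n : forall c A B D, msbl M D -> (forall i, (i < n)%nat -> msbl M (A i)) ->
  (forall x, D x -> fsum n (fun i => c i * ind (A i) x) <= B) ->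
  fsum n (fun i => c i * mu M (fun x => A i x /\ D x)) <= B * mu M D.
Proof.
  induction n; intros c A B D HD HA H.
  - simpl. destruct (classic (exists x, D x)) as [[x Hx]|Hn].
    + specialize (H x Hx); simpl in H. assert (0 <= mu M D) by (apply mu_nonneg; auto). nra.
    + rewrite (mu_ext D (fun _ => False)), mu_empty by (intros x; split; [intros h; apply Hn; eauto|tauto]).
      lra.
  - set (D1 := fun x => D x /\ A n x). set (D2 := fun x => D x /\ ~ A n x).
    assert (HAn : msbl M (A n)) by (apply HA; lia).
    assert (HD1 : msbl M D1) by (apply msbl_inter; auto).
    assert (HD2 : msbl M D2) by (apply msbl_inter; auto; apply msbl_compl; auto).
    assert (IH1 := IHn c A (B - c n) D1 HD1 ltac:(intros; apply HA; lia)
       ltac:(intros x [Hx Hx']; specialize (H x Hx); simpl in H; rewrite (ind_in (A n) x Hx') in H; lra)).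
    assert (IH2 := IHn c A B D2 HD2 ltac:(intros; apply HA; lia)
       ltac:(intros x [Hx Hx']; specialize (H x Hx); simpl in H; rewrite (ind_out (A n) x Hx') in H; lra)).
    rewrite (mu_split D (A n) HD HAn). fold D1 D2. simpl fsum.
    rewrite (fsum_ext n _ (fun i => c i * mu M (fun x => A i x /\ D1 x) + c i * mu M (fun x => A i x /\ D2 x))).
    2:{ intros i Hi. rewrite (mu_split (fun x => A i x /\ D x) (A n)) by (auto; apply msbl_inter; auto; apply HA; lia).
        rewrite (mu_ext (fun x => (A i x /\ D x) /\ A n x) (fun x => A i x /\ D1 x)) by (unfold D1; tauto).
        rewrite (mu_ext (fun x => (A i x /\ D x) /\ ~ A n x) (fun x => A i x /\ D2 x)) by (unfold D2; tauto).
        ring. }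
    rewrite fsum_add, (mu_ext (fun x => A n x /\ D x) D1) by (unfold D1; tauto).
    lra.
Qed.

Lemma simple_sum_ge n c A B D : msbl M D -> (forall i, (i < n)%nat -> msbl M (A i)) ->
  (forall x, D x -> B <= fsum n (fun i => c i * ind (A i) x)) ->
  B * mu M D <= fsum n (fun i => c i * mu M (fun x => A i x /\ D x)).
Proof.
  intros HD HA H.
  assert (Eopp : forall h : nat -> R, fsum n (fun i => - c i * h i) = - fsum n (fun i => c i * h i)).
  { intros h. replace (- fsum n _) with (-1 * fsum n (fun i => c i * h i)) by ring.
    rewrite <- fsum_scal.
    apply fsum_ext; intros; ring. }
  assert (U := simple_sum_le n (fun i => - c i) A (- B) D HD HA).
  rewrite Eopp in U.
  enough (- fsum n (fun i => c i * mu M (fun x => A i x /\ D x)) <= - B * mu M D) by lra.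
  apply U. intros x Hx. rewrite Eopp. specialize (H x Hx). lra.
Qed.
End Measure.

Definition bounded01 (f : R -> R) (B : R) := forall x, in01 x -> 0 <= f x <= B.

Section Integral.
Variable M : fmeasure01.

Lemma simple_below_le f B v : bounded01 f B -> simple_below M f v -> v <= B * mu M in01.
Proof.
  intros Hf [n [c [A [HA [Hle ->]]]]].
  rewrite (fsum_ext n _ (fun i => c i * mu M (fun x => A i x /\ in01 x)))
    by (intros; rewrite mu_support; auto; apply HA; auto).
  apply simple_sum_le; [apply msbl01 | intros; apply HA; auto|].
  intros x Hx. specialize (Hle x Hx). specialize (Hf x Hx). lra.
Qed.

Lemma simple_below_0 f : (forall x, in01 x -> 0 <= f x) -> simple_below M f 0.
Proof.
  intros H. exists 0%nat, (fun _ => 0), (fun _ _ => False).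
  simpl; repeat split; auto; intros; lia.
Qed.

(* [Rsup] returns a genuine supremum here: for bounded [f] the values of simple functions
   below [f] are bounded by [B * mu M in01] and include [0]. *)
Lemma integral_lub f B : bounded01 f B -> is_lub (simple_below M f) (integral M f).
Proof.
  intros Hf. unfold integral, Rsup.
  destruct (excluded_middle_informative _) as [H|H].
  - apply (proj2_sig (completeness _ _ _)).
  - exfalso; apply H. split.
    + exists (B * mu M in01). intros v Hv. eapply simple_below_le; eauto.
    + exists 0; apply simple_below_0. intros; apply Hf; auto.
Qed.

Lemma simple_below_le_integral f B v :
  bounded01 f B -> simple_below M f v -> v <= integral M f.
Proof. intros Hf Hv. apply (proj1 (integral_lub f B Hf)); auto. Qed.

Lemma integral_nonneg f B : bounded01 f B -> 0 <= integral M f.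
Proof.
  intros Hf. eapply simple_below_le_integral; eauto.
  apply simple_below_0; intros; apply Hf; auto.
Qed.

Lemma integral_le f g B : bounded01 g B -> (forall x, in01 x -> 0 <= f x <= g x) ->
  integral M f <= integral M g.
Proof.
  intros Hg Hfg.
  assert (Hf : bounded01 f B) by (intros x Hx; specialize (Hg x Hx); specialize (Hfg x Hx); lra).
  apply (proj2 (integral_lub f B Hf)). intros v [n [c [A [HA [Hle Hv]]]]].
  eapply simple_below_le_integral; eauto. exists n, c, A. repeat split; auto.
  - apply HA; auto.
  - apply HA; auto.
  - intros x Hx; specialize (Hle x Hx); specialize (Hfg x Hx); lra.
Qed.

Lemma simple_below_add f g v w : simple_below M f v -> simple_below M g w ->
  simple_below M (fun x => f x + g x) (v + w).
Proof.
  intros [n1 [c1 [A1 [H1 [H2 H3]]]]] [n2 [c2 [A2 [G1 [G2 G3]]]]].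
  set (glue := fun (T : Type) (u1 u2 : nat -> T) i => if Nat.ltb i n1 then u1 i else u2 (i - n1)%nat).
  assert (Hglue : forall (h1 h2 : nat -> R) (F : nat -> R),
     (forall i, (i < n1)%nat -> F i = h1 i) -> (forall i, (i < n2)%nat -> F (n1 + i)%nat = h2 i) ->
     fsum (n1 + n2) F = fsum n1 h1 + fsum n2 h2).
  { intros h1 h2 F E1 E2. rewrite fsum_app. f_equal; apply fsum_ext; auto. }
  assert (Hlo : forall T (u1 u2 : nat -> T) i, (i < n1)%nat -> glue T u1 u2 i = u1 i).
  { intros T u1 u2 i Hi. unfold glue. apply Nat.ltb_lt in Hi. rewrite Hi. reflexivity. }
  assert (Hhi : forall T (u1 u2 : nat -> T) i, glue T u1 u2 (n1 + i)%nat = u2 i).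
  { intros T u1 u2 i. unfold glue. replace (Nat.ltb (n1 + i) n1) with false
      by (symmetry; apply Nat.ltb_ge; lia). f_equal; lia. }
  exists (n1 + n2)%nat, (glue R c1 c2), (glue (R -> Prop) A1 A2). split; [|split].
  - intros i Hi. destruct (Nat.lt_ge_cases i n1).
    + rewrite !Hlo by auto. apply H1; auto.
    + replace i with (n1 + (i - n1))%nat by lia. rewrite !Hhi. apply G1; lia.
  - intros x Hx. rewrite (Hglue (fun i => c1 i * ind (A1 i) x) (fun i => c2 i * ind (A2 i) x)).
    + specialize (H2 x Hx); specialize (G2 x Hx); lra.
    + intros i Hi. rewrite !Hlo; auto.
    + intros i Hi. rewrite !Hhi; auto.
  - subst. symmetry. apply Hglue.
    + intros i Hi. rewrite !Hlo; auto.
    + intros i Hi. rewrite !Hhi; auto.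
Qed.

Lemma integral_add_ge f g B1 B2 : bounded01 f B1 -> bounded01 g B2 ->
  integral M f + integral M g <= integral M (fun x => f x + g x).
Proof.
  intros Hf Hg.
  assert (Hfg : bounded01 (fun x => f x + g x) (B1 + B2))
    by (intros x Hx; specialize (Hf x Hx); specialize (Hg x Hx); lra).
  assert (K : forall w, simple_below M g w ->
                integral M f <= integral M (fun x => f x + g x) - w).
  { intros w Hw. apply (proj2 (integral_lub f B1 Hf)). intros v Hv.
    assert (v + w <= integral M (fun x => f x + g x))
      by (eapply simple_below_le_integral; eauto; apply simple_below_add; auto).
    lra. }
  assert (integral M g <= integral M (fun x => f x + g x) - integral M f); [|lra].
  apply (proj2 (integral_lub g B2 Hg)). intros w Hw. specialize (K w Hw). lra.
Qed.

Lemma integral_scal_ge c f B : 0 <= c -> bounded01 f B ->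
  c * integral M f <= integral M (fun x => c * f x).
Proof.
  intros Hc Hf.
  assert (Hcf : bounded01 (fun x => c * f x) (c * B)) by (intros x Hx; specialize (Hf x Hx); split; nra).
  destruct (Req_dec c 0) as [->|Hc0].
  - rewrite Rmult_0_l. eapply integral_nonneg; eauto.
  - enough (integral M f <= integral M (fun x => c * f x) / c)
      by (apply (Rmult_le_compat_l c) in H; [|lra]; field_simplify in H; lra).
    apply (proj2 (integral_lub f B Hf)). intros v [n [d [A [HA [Hle ->]]]]].
    enough (c * fsum n (fun i => d i * mu M (A i)) <= integral M (fun x => c * f x))
      by (apply (Rmult_le_reg_l c); [lra|]; field_simplify; lra).
    eapply simple_below_le_integral; eauto. exists n, (fun i => c * d i), A. split; [|split].
    + intros i Hi. destruct (HA i Hi). split; auto. apply Rmult_le_pos; auto.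
    + intros x Hx. specialize (Hle x Hx).
      rewrite (fsum_ext n _ (fun i => c * (d i * ind (A i) x))) by (intros; ring).
      rewrite fsum_scal. apply Rmult_le_compat_l; auto.
    + rewrite <- fsum_scal. apply fsum_ext; intros; ring.
Qed.

Lemma integral_fsum_ge n (f : nat -> R -> R) (B : nat -> R) : (forall i, bounded01 (f i) (B i)) ->
  fsum n (fun i => integral M (f i)) <= integral M (fun x => fsum n (fun i => f i x)).
Proof.
  intros Hf. induction n.
  - simpl. apply (integral_nonneg _ 0). intros x _; lra.
  - assert (Hn : bounded01 (fun x => fsum n (fun i => f i x)) (fsum n B)).
    { intros x Hx; split; [apply fsum_nonneg | apply fsum_le]; intros; apply Hf; auto. }
    simpl. eapply Rle_trans; [|apply (integral_add_ge _ _ _ _ Hn (Hf n))]. lra.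
Qed.
End Integral.

Lemma div_le_bound a b c : 0 < c -> a <= b * c -> a / c <= b.
Proof.
  intros Hc H. apply (Rmult_le_reg_r c); auto.
  unfold Rdiv; rewrite Rmult_assoc, Rinv_l; lra.
Qed.

Lemma le_div_bound a b c : 0 < c -> a * c <= b -> a <= b / c.
Proof.
  intros Hc H. apply (Rmult_le_reg_r c); auto.
  unfold Rdiv; rewrite Rmult_assoc, Rinv_l; lra.
Qed.

Lemma bernoulli_ineq d m : 0 <= d <= 1 -> 1 - INR m * d <= (1 - d) ^ m.
Proof.
  intros Hd. induction m; [simpl; lra|].
  rewrite S_INR; simpl. assert (0 <= INR m) by apply pos_INR. nra.
Qed.

Lemma pow_unit_interval x n : 0 <= x <= 1 -> 0 <= x ^ n <= 1.
Proof. intros H; induction n; simpl; [lra|nra]. Qed.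

Lemma C_nonneg n k : 0 <= C n k.
Proof.
  unfold C. apply Rmult_le_pos; [apply pos_INR|]. apply Rlt_le, Rinv_0_lt_compat.
  apply Rmult_lt_0_compat; apply lt_0_INR, lt_O_fact.
Qed.

Lemma C_n_0 n : C n 0 = 1.
Proof. unfold C. simpl. rewrite Nat.sub_0_r. field. apply INR_fact_neq_0. Qed.

Lemma C_succ_mul m i : (i <= m)%nat -> INR (S i) * C (S m) (S i) = INR (S m) * C m i.
Proof.
  intros H. unfold C. replace (S m - S i)%nat with (m - i)%nat by lia.
  change (fact (S m)) with (S m * fact m)%nat. change (fact (S i)) with (S i * fact i)%nat.
  rewrite !mult_INR. field. repeat split; try apply INR_fact_neq_0. apply not_0_INR; lia.
Qed.

Lemma binomial_tail x a :
  1 - (1 - x) ^ a = x * fsum a (fun i => C a (S i) * (x ^ i * (1 - x) ^ (a - S i))).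
Proof.
  assert (H := binomial x (1 - x) a). replace (x + (1 - x)) with 1 in H by ring.
  rewrite pow1, <- fsum_sum_f_R0, fsum_shift, C_n_0, Nat.sub_0_r, pow_O in H.
  rewrite <- fsum_scal.
  replace (fsum a _) with (fsum a (fun i => C a (S i) * x ^ S i * (1 - x) ^ (a - S i)))
    by (apply fsum_ext; intros; simpl; ring).
  lra.
Qed.

Lemma binomial_mean x y m :
  fsum (S m) (fun i => C (S m) (S i) * INR (S i) * (x ^ i * y ^ (m - i))) = INR (S m) * (x + y) ^ m.
Proof.
  rewrite (binomial x y m), <- fsum_sum_f_R0, <- fsum_scal.
  apply fsum_ext. intros i Hi.
  rewrite (Rmult_comm (C _ _)), C_succ_mul by lia. ring.
Qed.

Definition Phi_integrand (a : nat) (x : R) := (1 - (1 - x) ^ a) / x.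

Lemma Phi_integrand_bounded a : bounded01 (Phi_integrand a) (INR a).
Proof.
  intros x [H0 H1]. unfold Phi_integrand.
  assert (Hpow := pow_unit_interval (1 - x) a ltac:(lra)).
  assert (Hber := bernoulli_ineq x a ltac:(lra)).
  split; [apply Rle_mult_inv_pos; lra|].
  apply div_le_bound; lra.
Qed.

Lemma lam_integrand_bounded m k : bounded01 (fun x => x ^ (k - 1) * (1 - x) ^ (m - k)) 1.
Proof.
  intros x [H0 H1].
  assert (A := pow_unit_interval x (k - 1) ltac:(lra)).
  assert (B := pow_unit_interval (1 - x) (m - k) ltac:(lra)).
  split; nra.
Qed.

Definition cell (N j : nat) (x : R) : Prop := INR j / INR N < x <= INR (S j) / INR N.

Lemma cell_unique N j k x : cell N j x -> cell N k x -> j = k.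
Proof.
  unfold cell. intros [Hj1 Hj2] [Hk1 Hk2].
  assert (HN : 0 < INR N).
  { destruct N; [simpl in Hj1, Hj2; rewrite Rdiv_0_r in Hj1, Hj2; lra|]. apply lt_0_INR; lia. }
  assert (Hmono : forall p q, (p <= q)%nat -> INR p / INR N <= INR q / INR N)
    by (intros; apply Rmult_le_compat_r; [apply Rlt_le, Rinv_0_lt_compat; auto|apply le_INR; auto]).
  destruct (Nat.lt_trichotomy j k) as [L|[L|L]]; auto; exfalso.
  - assert (Hjk := Hmono (S j) k L). lra.
  - assert (Hkj := Hmono (S k) j L). lra.
Qed.

Lemma cell_cover N x : (0 < N)%nat -> in01 x -> exists j, (j < N)%nat /\ cell N j x.
Proof.
  intros HN [Hx0 Hx1].
  enough (H : forall k, x <= INR k / INR N -> exists j, (j < k)%nat /\ cell N j x).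
  { destruct (H N) as [j Hj]; [|exists j; tauto].
    rewrite Rdiv_diag by (apply not_0_INR; lia). lra. }
  induction k; intros Hxk.
  - simpl in Hxk. rewrite Rdiv_0_l in Hxk. lra.
  - destruct (Rle_lt_dec x (INR k / INR N)) as [L|L].
    + destruct (IHk L) as [j [Hj1 Hj2]]. exists j; split; auto.
    + exists k. unfold cell. split; [lia | lra].
Qed.

Section JumpRates.
Variable M : fmeasure01.

Lemma phi_nonneg m k : 0 <= phi M m k.
Proof.
  apply Rmult_le_pos; [apply C_nonneg|]. eapply integral_nonneg; apply lam_integrand_bounded.
Qed.

Lemma PhiN_nonneg a : 0 <= PhiN M a.
Proof. exact (integral_nonneg M _ _ (Phi_integrand_bounded a)). Qed.

Lemma PhiN_ge_mass a : (1 <= a)%nat -> mu M in01 <= PhiN M a.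
Proof.
  intros Ha. apply (simple_below_le_integral M _ (INR a)); [apply Phi_integrand_bounded|].
  exists 1%nat, (fun _ => 1), (fun _ => in01). split; [|split].
  - intros; split; [lra | apply msbl01].
  - intros x Hx. simpl. rewrite ind_in by auto. destruct Hx as [H0 H1].
    apply le_div_bound; [lra|].
    destruct a; [lia|]. simpl. assert (P := pow_unit_interval (1 - x) a ltac:(lra)). nra.
  - simpl; ring.
Qed.

Lemma sum_phi_le_PhiN a : fsum a (fun i => phi M a (S i)) <= PhiN M a.
Proof.
  unfold phi, lam, PhiN.
  eapply Rle_trans.
  { apply fsum_le. intros i Hi.
    apply (integral_scal_ge M (C a (S i)) _ 1); [apply C_nonneg | apply lam_integrand_bounded]. }
  eapply Rle_trans.
  { apply (integral_fsum_ge M a (fun i x => C a (S i) * (x ^ (S i - 1) * (1 - x) ^ (a - S i)))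
             (fun i => C a (S i) * 1)).
    intros i x Hx. destruct (lam_integrand_bounded a (S i) x Hx).
    assert (0 <= C a (S i)) by apply C_nonneg. split; nra. }
  apply (integral_le M _ _ (INR a) (Phi_integrand_bounded a)).
  intros x Hx. replace (fsum a _) with (Phi_integrand a x).
  - split; [apply (Phi_integrand_bounded a x Hx) | lra].
  - destruct Hx as [H0 H1]. unfold Phi_integrand. rewrite binomial_tail.
    field_simplify; [|lra]. apply fsum_ext; intros; simpl; rewrite Nat.sub_0_r; ring.
Qed.

Lemma msbl_cell N j : msbl M (cell N j).
Proof.
  apply (msbl_ext M (fun x => INR j / INR N < x /\ ~ (INR (S j) / INR N < x))).
  - intros x. unfold cell. lra.
  - apply msbl_inter; [apply msbl_gt | apply msbl_compl, msbl_gt].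
Qed.

Lemma mass_le_sum_cells N : (0 < N)%nat -> mu M in01 <= fsum N (fun j => mu M (cell N j)).
Proof.
  intros HN.
  rewrite (fsum_ext N _ (fun j => 1 * mu M (fun x => cell N j x /\ in01 x)))
    by (intros; rewrite mu_support by apply msbl_cell; ring).
  rewrite <- (Rmult_1_l (mu M in01)).
  apply simple_sum_ge; [apply msbl01 | intros; apply msbl_cell|].
  intros x Hx. destruct (cell_cover N x HN Hx) as [j [Hj Hcell]].
  apply (Rle_trans _ (1 * ind (cell N j) x)); [rewrite ind_in by auto; lra|].
  apply (fsum_ge_term N (fun j => 1 * ind (cell N j) x)); auto.
  intros; rewrite Rmult_1_l; apply ind_nonneg.
Qed.

(* On [cell N j], [x] lies above [j/N] and [1 - x] above [1 - (j+1)/N]. *)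
Lemma lam_ge_cells N m i : (0 < N)%nat ->
  fsum N (fun j => (INR j / INR N) ^ i * (1 - INR (S j) / INR N) ^ (m - i) * mu M (cell N j))
  <= lam M (S m) (S i).
Proof.
  intros HN. apply (simple_below_le_integral M _ 1); [apply lam_integrand_bounded|].
  assert (HNr : 0 < INR N) by (apply lt_0_INR; auto).
  assert (Hlo : forall j, 0 <= INR j / INR N) by (intros; apply Rle_mult_inv_pos; [apply pos_INR | auto]).
  assert (Hhi : forall j, (j < N)%nat -> 0 <= 1 - INR (S j) / INR N).
  { intros j Hj. assert (INR (S j) <= INR N) by (apply le_INR; lia).
    enough (INR (S j) / INR N <= 1) by lra. apply div_le_bound; lra. }
  eexists N, _, (cell N). split; [|split]; [| |reflexivity].
  - intros j Hj. split; [|apply msbl_cell]. apply Rmult_le_pos; apply pow_le; auto.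
  - intros x Hx. apply fsum_ind_disjoint_le.
    + intros; eapply cell_unique; eauto.
    + intros j Hj [Hx1 Hx2]. replace (S i - 1)%nat with i by lia.
      replace (S m - S i)%nat with (m - i)%nat by lia.
      apply Rmult_le_compat; try apply pow_le; auto; apply pow_incr; split; auto; lra.
    + apply (lam_integrand_bounded (S m) (S i) x Hx).
Qed.

(* Bound each [lam] from below by its lower Riemann-type sum over the grid of step [1/N];
   on each cell the binomial mean collapses the sum over [i]. *)
Lemma sum_phi_mul_ge_grid N m : (0 < N)%nat ->
  INR (S m) * (1 - 1 / INR N) ^ m * mu M in01
  <= fsum (S m) (fun i => phi M (S m) (S i) * INR (S i)).
Proof.
  intros HN. assert (HNr : 0 < INR N) by (apply lt_0_INR; auto).
  set (mass := fun j => mu M (cell N j)).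
  set (cst := fun i j => (INR j / INR N) ^ i * (1 - INR (S j) / INR N) ^ (m - i)).
  assert (Hcell : forall j, INR j / INR N + (1 - INR (S j) / INR N) = 1 - 1 / INR N)
    by (intros; rewrite S_INR; field; lra).
  assert (Hstep : 0 <= 1 - 1 / INR N).
  { enough (1 / INR N <= 1) by lra. apply div_le_bound; auto.
    assert (1 <= INR N) by (apply (le_INR 1); lia). lra. }
  apply (Rle_trans _ (fsum (S m) (fun i => C (S m) (S i) * INR (S i) * fsum N (fun j => cst i j * mass j)))).
  2:{ apply fsum_le. intros i Hi. unfold phi.
      replace (C (S m) (S i) * lam M (S m) (S i) * INR (S i))
        with (C (S m) (S i) * INR (S i) * lam M (S m) (S i)) by ring.
      apply Rmult_le_compat_l; [apply Rmult_le_pos; [apply C_nonneg | apply pos_INR]|].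
      apply lam_ge_cells; auto. }
  rewrite (fsum_ext _ _ (fun i => fsum N (fun j => mass j * (C (S m) (S i) * INR (S i) * cst i j))))
    by (intros; rewrite <- fsum_scal; apply fsum_ext; intros; ring).
  rewrite fsum_swap.
  rewrite (fsum_ext _ _ (fun j => INR (S m) * (1 - 1 / INR N) ^ m * mass j))
    by (intros j _; rewrite fsum_scal; unfold cst; rewrite binomial_mean, Hcell; ring).
  rewrite fsum_scal. apply Rmult_le_compat_l.
  - apply Rmult_le_pos; [apply pos_INR | apply pow_le; auto].
  - apply mass_le_sum_cells; auto.
Qed.

(* With the grid step [1/(2a)], Bernoulli's inequality bounds the grid factor by [1/2]. *)
Lemma sum_phi_mul_ge a : (1 <= a)%nat ->
  mu M in01 / 2 * INR a <= fsum a (fun i => phi M a (S i) * INR (S i)).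
Proof.
  intros Ha. destruct a as [|m]; [lia|].
  assert (Hm := pos_INR m).
  assert (HN : INR (2 * S m)%nat = 2 * (INR m + 1))
    by (rewrite mult_INR, (S_INR m); simpl (INR 2); ring).
  assert (Hgrid : 1 / 2 <= (1 - 1 / INR (2 * S m)%nat) ^ m).
  { eapply Rle_trans; [|apply bernoulli_ineq]; rewrite HN.
    - apply (Rmult_le_reg_r (2 * (INR m + 1))); [lra|]. field_simplify; lra.
    - split; [apply Rle_mult_inv_pos; lra | apply div_le_bound; lra]. }
  assert (Hmass : 0 <= mu M in01) by (apply mu_nonneg, msbl01).
  eapply Rle_trans; [|apply (sum_phi_mul_ge_grid (2 * S m)%nat); lia].
  rewrite S_INR. set (p := (1 - 1 / INR (2 * S m)) ^ m) in *.
  assert (0 <= (INR m + 1) * mu M in01) by nra. nra.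
Qed.
End JumpRates.

Section JumpChain.
Variable M : fmeasure01.
Hypothesis mass_pos : 0 < mu M in01.

Lemma PhiN_pos a : (1 <= a)%nat -> 0 < PhiN M a.
Proof. intros Ha. assert (H := PhiN_ge_mass M a Ha). lra. Qed.

Lemma Pjump_nonneg a c : (1 <= a)%nat -> 0 <= Pjump M a c.
Proof.
  intros Ha. apply Rle_mult_inv_pos; [apply phi_nonneg | apply PhiN_pos; auto].
Qed.

Lemma jpow_nonneg t : forall a b, 0 <= jpow M t a b.
Proof.
  induction t; intros a b; simpl.
  - destruct (Nat.eqb a b); lra.
  - apply fsum_nonneg. intros c Hc. apply Rmult_le_pos; [apply Pjump_nonneg; lia | auto].
Qed.

(* Jumps from [a] to [c] are indexed by the jump size [a - c]. *)
Lemma fsum_Pjump a h : fsum a (fun c => Pjump M a c * h (a - c)%nat)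
  = / PhiN M a * fsum a (fun i => phi M a (S i) * h (S i)).
Proof.
  rewrite <- (fsum_rev a (fun k => phi M a k * h k)), <- fsum_scal.
  apply fsum_ext; intros; unfold Pjump, Rdiv; ring.
Qed.

Lemma sum_Pjump_le_1 a : (1 <= a)%nat -> fsum a (fun c => Pjump M a c) <= 1.
Proof.
  intros Ha. assert (HP := PhiN_pos a Ha).
  assert (E : fsum a (fun c => Pjump M a c) = / PhiN M a * fsum a (fun i => phi M a (S i))).
  { etransitivity; [|etransitivity; [exact (fsum_Pjump a (fun _ => 1))|]].
    - apply fsum_ext; intros; ring.
    - f_equal; apply fsum_ext; intros; ring. }
  rewrite E, Rmult_comm. apply div_le_bound; [auto|].
  rewrite Rmult_1_l. apply sum_phi_le_PhiN.
Qed.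

Lemma sum_Pjump_dist_ge a : (1 <= a)%nat ->
  mu M in01 / 2 * INR a / PhiN M a <= fsum a (fun c => Pjump M a c * INR (a - c)).
Proof.
  intros Ha. assert (HP := PhiN_pos a Ha).
  rewrite (fsum_Pjump a INR), (Rmult_comm (/ PhiN M a)). unfold Rdiv at 1.
  apply Rmult_le_compat_r; [apply Rlt_le, Rinv_0_lt_compat; auto|].
  apply sum_phi_mul_ge; auto.
Qed.
End JumpChain.

(* [reward M r s a L] is the expected value of [r X_s] for the jump chain [X] started at [a],
   counting only the states [1..L]. *)
Definition reward (M : fmeasure01) (r : nat -> R) (s a L : nat) : R :=
  fsum L (fun i => jpow M s a (S i) * r (S i)).

Lemma reward_S M r s a L :
  reward M r (S s) a L = fsum a (fun c => Pjump M a c * reward M r s c L).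
Proof.
  unfold reward. simpl jpow.
  rewrite (fsum_ext L _ (fun i => fsum a (fun c => Pjump M a c * (jpow M s c (S i) * r (S i)))))
    by (intros; rewrite Rmult_comm, <- fsum_scal; apply fsum_ext; intros; ring).
  rewrite fsum_swap. apply fsum_ext. intros. apply fsum_scal.
Qed.

Lemma a_seq_eq_sum_reward M r n : a_seq M r n = fsum (S n) (fun s => reward M r s n n).
Proof.
  unfold a_seq, g, reward. rewrite <- fsum_swap. apply fsum_ext. intros i _.
  rewrite Rmult_comm, <- fsum_scal. apply fsum_ext; intros; ring.
Qed.

Section Reward.
Variable M : fmeasure01.
Hypothesis mass_pos : 0 < mu M in01.
Variables (r V : nat -> R).
Hypothesis r_nonneg : forall k, 0 <= r k.
Hypothesis V_nonneg : forall a, 0 <= V a.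
Hypothesis V_superharmonic : forall a, (1 <= a)%nat ->
  r a + fsum a (fun c => Pjump M a c * V c) <= V a.

Lemma reward_0_le a L : (1 <= a)%nat -> reward M r 0 a L <= r a.
Proof.
  intros Ha. unfold reward. induction L; cbn [fsum]; auto.
  change (jpow M 0 a (S L)) with (if Nat.eqb a (S L) then 1 else 0).
  destruct (Nat.eqb_spec a (S L)) as [->|Hne]; [|lra].
  rewrite fsum_zero; [lra|]. intros i Hi.
  change (jpow M 0 (S L) (S i)) with (if Nat.eqb L i then 1 else 0).
  destruct (Nat.eqb_spec L i); [lia | ring].
Qed.

Lemma sum_reward_le t : forall a L, fsum t (fun s => reward M r s a L) <= V a.
Proof.
  induction t; intros a L; [apply V_nonneg|].
  rewrite fsum_shift.
  rewrite (fsum_ext t _ (fun s => fsum a (fun c => Pjump M a c * reward M r s c L)))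
    by (intros; apply reward_S).
  rewrite <- fsum_swap.
  rewrite (fsum_ext a _ (fun c => Pjump M a c * fsum t (fun s => reward M r s c L)))
    by (intros; apply fsum_scal).
  destruct a as [|a].
  - assert (H0 := V_nonneg 0%nat). unfold reward.
    rewrite fsum_zero; [simpl; lra|]. intros; simpl; ring.
  - eapply Rle_trans; [|apply V_superharmonic; lia].
    apply Rplus_le_compat; [apply reward_0_le; lia|].
    apply fsum_le. intros c Hc. apply Rmult_le_compat_l; [apply Pjump_nonneg; auto; lia | auto].
Qed.
End Reward.

Section Potential.
Variable M : fmeasure01.
Hypothesis mass_pos : 0 < mu M in01.
Variable r : nat -> R.
Hypothesis r_nonneg : forall k, 0 <= r k.
Hypothesis b_term_noninc : forall k : nat, (1 <= k)%nat ->
  PhiN M (S k) * r (S k) / INR (S k) <= PhiN M k * r k / INR k.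

Definition b_term (k : nat) : R := PhiN M k * r k / INR k.

Lemma b_term_nonneg k : 0 <= b_term k.
Proof.
  unfold b_term. destruct k as [|k].
  - simpl. rewrite Rdiv_0_r. lra.
  - apply Rle_mult_inv_pos; [apply Rmult_le_pos; auto; apply PhiN_nonneg|].
    apply lt_0_INR; lia.
Qed.

Lemma b_seq_S n : b_seq M r (S n) = b_seq M r n + b_term (S n).
Proof. unfold b_seq, b_term. simpl. unfold Rdiv; ring. Qed.

Lemma b_seq_nonneg n : 0 <= b_seq M r n.
Proof.
  induction n; [unfold b_seq; simpl; lra|].
  rewrite b_seq_S. assert (H := b_term_nonneg (S n)). lra.
Qed.

Lemma b_seq_gap c d : INR d * b_term (c + d) <= b_seq M r (c + d) - b_seq M r c.
Proof.
  induction d.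
  - rewrite Nat.add_0_r. simpl. lra.
  - rewrite Nat.add_succ_r, b_seq_S, S_INR.
    assert (INR d * b_term (S (c + d)) <= INR d * b_term (c + d)); [|lra].
    destruct d; [simpl; lra|].
    apply Rmult_le_compat_l; [apply pos_INR|]. apply b_term_noninc. lia.
Qed.

Definition potential (a : nat) : R := b_seq M r a / (mu M in01 / 2).

Lemma potential_nonneg a : 0 <= potential a.
Proof. apply Rle_mult_inv_pos; [apply b_seq_nonneg | lra]. Qed.

Lemma potential_superharmonic a : (1 <= a)%nat ->
  r a + fsum a (fun c => Pjump M a c * potential c) <= potential a.
Proof.
  intros Ha. assert (HP := PhiN_pos M mass_pos a Ha).
  set (kap := mu M in01 / 2). assert (Hkap : 0 < kap) by (unfold kap; lra).
  set (SP := fsum a (fun c => Pjump M a c)).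
  set (SD := fsum a (fun c => Pjump M a c * INR (a - c))).
  assert (Hinv : 0 < / kap) by (apply Rinv_0_lt_compat; auto).
  assert (Hdrop : fsum a (fun c => Pjump M a c * potential c)
     <= fsum a (fun c => / kap * b_seq M r a * Pjump M a c
                         + - (/ kap * b_term a) * (Pjump M a c * INR (a - c)))).
  { apply fsum_le. intros c Hc.
    assert (Hgap := b_seq_gap c (a - c)). replace (c + (a - c))%nat with a in Hgap by lia.
    assert (0 <= Pjump M a c) by (apply Pjump_nonneg; auto).
    assert (Pjump M a c * b_seq M r c <= Pjump M a c * (b_seq M r a - INR (a - c) * b_term a))
      by (apply Rmult_le_compat_l; lra).
    unfold potential. fold kap. unfold Rdiv. nra. }
  rewrite fsum_add, !fsum_scal in Hdrop. change (fsum a (Pjump M a)) with SP in Hdrop. fold SD in Hdrop.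
  assert (HSP : SP <= 1) by (apply sum_Pjump_le_1; auto).
  assert (HSD : kap * INR a / PhiN M a <= SD) by (apply sum_Pjump_dist_ge; auto).
  assert (Hr : r a = b_term a * INR a / PhiN M a).
  { unfold b_term. assert (INR a <> 0) by (apply not_0_INR; lia). field. split; lra. }
  assert (Hb := b_seq_nonneg a). assert (Hw := b_term_nonneg a).
  assert (Hrate : r a <= b_term a * SD / kap).
  { rewrite Hr. apply le_div_bound; auto.
    replace (b_term a * INR a / PhiN M a * kap) with (b_term a * (kap * INR a / PhiN M a))
      by (field; lra).
    apply Rmult_le_compat_l; auto. }
  assert (Hkb : 0 <= / kap * b_seq M r a) by (apply Rmult_le_pos; lra).
  assert (/ kap * b_seq M r a * SP <= / kap * b_seq M r a) by nra.
  replace (potential a) with (/ kap * b_seq M r a) by (unfold potential; fold kap; unfold Rdiv; ring).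
  unfold Rdiv in Hrate. lra.
Qed.
End Potential.

Theorem lemma2 (M : fmeasure01)
  (Hnonzero : mu M in01 <> 0)
  (r : nat -> R)
  (Hr : forall k, 0 <= r k)
  (Hmono : forall k : nat, (1 <= k)%nat ->
     PhiN M (S k) * r (S k) / INR (S k) <= PhiN M k * r k / INR k) :
  exists (K : R) (N : nat), forall n : nat, (N <= n)%nat ->
    Rabs (a_seq M r n) <= K * Rabs (b_seq M r n).
Proof.
  assert (Hmass : 0 < mu M in01).
  { destruct (mu_nonneg M in01 (msbl01 M)) as [H|H]; [auto | exfalso; auto]. }
  exists (/ (mu M in01 / 2)), 0%nat. intros n _.
  assert (Ha : 0 <= a_seq M r n).
  { rewrite a_seq_eq_sum_reward. apply fsum_nonneg. intros s _.
    apply fsum_nonneg. intros i _. apply Rmult_le_pos; auto. apply jpow_nonneg; auto. }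
  rewrite Rabs_right, (Rabs_right (b_seq M r n)) by (apply Rle_ge; auto using b_seq_nonneg).
  rewrite a_seq_eq_sum_reward, Rmult_comm.
  apply (sum_reward_le M Hmass r (potential M r) Hr (potential_nonneg M Hmass r Hr)).
  apply potential_superharmonic; auto.
Qed.
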